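(* Let $S:\mathbb{R}^m\times\mathbb{R}^n\to\mathbb{R}^q$ be bilinear with lifted operator $\mathscr{S}$, let $\mathcal{K}'\subseteq\mathbb{R}^{m\times n}$ and $\mathcal{M}=\mathcal{K}'-\mathcal{K}'$. Let $X\in\mathcal{N}(\mathscr{S},2)\cap\mathcal{M}\setminus\{0\}$ be a given matrix and $\delta\in(0,1)$. Let $\mathbf{M}=xy^T=\sigma uv^T$ be a random rank one matrix with $u=x/\|x\|_2$, $v=y/\|y\|_2$, where $x\in\mathbb{R}^m,y\in\mathbb{R}^n$ satisfy: (A1) $x$ and $y$ each have zero mean and identity covariance; (A2) $x$ and $y$ are independent; and $\|x\|_2\ge r_x$ a.s. and $\|y\|_2\ge r_y$ a.s. for constants $r_x,r_y>0$. Then $\Pr(\|P_{\mathcal{C}(X)}u\|_2^2\ge1-\delta)\le\frac{2}{r_x^2(1-\delta)}$ and $\Pr(\|P_{\mathcal{R}(X)}v\|_2^2\ge1-\delta)\le\frac{2}{r_y^2(1-\delta)}$.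
   Context: For $j=1,\dots,q$ let $S_j$ be the unique matrix with $(S(x,y))_j=x^TS_jy$; the lifted operator is $(\mathscr{S}(W))_j=\operatorname{tr}(S_j^TW)$. $\mathcal{N}(\mathscr{S},k)=\{X:\operatorname{rank}(X)\le k,\ \mathscr{S}(X)=0\}$; $\mathcal{K}'-\mathcal{K}'=\{X_1-X_2:X_1,X_2\in\mathcal{K}'\}$. $\mathcal{C}(X)$, $\mathcal{R}(X)$ are column and row spaces; $P_{\mathcal{V}}$ is orthogonal projection onto $\mathcal{V}$. *)

From HB Require Import structures.
From mathcomp Require Import all_boot all_order all_algebra.
From mathcomp Require Import all_classical all_reals all_analysis.
Set Implicit Arguments. Unset Strict Implicit. Unset Printing Implicit Defensive.
Import Order.TTheory GRing.Theory Num.Theory.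
Local Open Scope ring_scope.
Local Open Scope classical_set_scope.

Definition bilinear_map (R : ringType) m n q
  (S : 'cV[R]_m -> 'cV[R]_n -> 'cV[R]_q) : Prop :=
  (forall y, linear (S^~ y)) /\ (forall x, linear (S x)).

(* S_j : the unique matrix with (S(x,y))_j = x^T S_j y,
   i.e. (S_j)_{ab} = (S(e_a, e_b))_j. *)
Definition Smat (R : ringType) m n q
  (S : 'cV[R]_m -> 'cV[R]_n -> 'cV[R]_q) (j : 'I_q) : 'M[R]_(m, n) :=
  \matrix_(a, b) S (delta_mx a 0) (delta_mx b 0) j 0.

Definition lifted (R : ringType) m n q
  (S : 'cV[R]_m -> 'cV[R]_n -> 'cV[R]_q) (W : 'M[R]_(m, n)) : 'cV[R]_q :=
  \col_j \tr ((Smat S j)^T *m W).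

Definition Nset (R : fieldType) m n q
  (S : 'cV[R]_m -> 'cV[R]_n -> 'cV[R]_q) (k : nat) : set 'M[R]_(m, n) :=
  [set X | (\rank X <= k)%N /\ lifted S X = 0].

Definition diffset (R : ringType) m n (K : set 'M[R]_(m, n)) : set 'M[R]_(m, n) :=
  [set X | exists X1 X2, K X1 /\ K X2 /\ X = X1 - X2].

(* P is the orthogonal projection matrix onto the column space C(A) of
   A : 'M_(p, k) (a subspace of R^p): P symmetric, idempotent, with the
   same column space as A (column spaces compared as row spaces of
   transposes). *)
Definition orth_proj_col (R : fieldType) p k (A : 'M[R]_(p, k)) (P : 'M[R]_p) : Prop :=
  P^T = P /\ P *m P = P /\ (P^T == A^T)%MS.

Definition orth_proj_row (R : fieldType) m n (X : 'M[R]_(m, n)) (P : 'M[R]_n) : Prop :=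
  orth_proj_col X^T P.

Definition sqnorm (R : realType) p (v : 'cV[R]_p) : R := \sum_i v i 0 ^+ 2.
Definition norm2 (R : realType) p (v : 'cV[R]_p) : R := Num.sqrt (sqnorm v).

Definition rvec {d} {T : measurableType d} {R : realType} (P : probability T R) p :=
  'I_p -> {RV P >-> R}.

Definition rvec_at {d} {T : measurableType d} {R : realType} (P : probability T R) p
  (x : rvec P p) (w : T) : 'cV[R]_p := \col_i x i w.

Definition zero_mean_id_cov {d} {T : measurableType d} {R : realType}
  (P : probability T R) p (x : rvec P p) : Prop :=
  (forall i, (x i : T -> R) \in Lfun P 2%:E) /\
  (forall i, 'E_P[x i]%E = 0%E) /\
  (forall i j, covariance P (x i) (x j) = (i == j)%:R%:E).

Definition sigma_rvec {d} {T : measurableType d} {R : realType}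
  (P : probability T R) p (x : rvec P p) : set (set T) :=
  <<s [set E | exists i (B : set R), measurable B /\ E = (x i) @^-1` B] >>.

Definition indep_rvec {d} {T : measurableType d} {R : realType}
  (P : probability T R) p k (x : rvec P p) (y : rvec P k) : Prop :=
  forall E F, sigma_rvec x E -> sigma_rvec y F -> P (E `&` F) = (P E * P F)%E.

From HB Require Import structures.
From mathcomp Require Import all_boot all_order all_algebra.
From mathcomp Require Import all_classical all_reals all_analysis.
Import Order.TTheory GRing.Theory Num.Theory.
Local Open Scope ring_scope.
Local Open Scope classical_set_scope.

(* Since P_C(X) is an orthogonal projection,
   |P u|^2 = |P x|^2 / |x|^2, so on the event |P u|^2 >= 1 - delta we have
   |P x|^2 >= (1 - delta) |x|^2 >= (1 - delta) r_x^2 almost surely.  Markov's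
   inequality bounds its probability by E|P x|^2 / (r_x^2 (1 - delta)), and for
   a zero-mean, identity-covariance x, E|P x|^2 = E[x^T P x] = tr P = rank P
   = rank X <= 2.  The same argument applies to v and P_R(X). *)

Lemma mxtrace_idem (F : fieldType) p (Q : 'M[F]_p) : Q *m Q = Q -> \tr Q = (\rank Q)%:R.
Proof.
move=> QQ.
have base_inv : row_base Q *m col_base Q = 1%:M.
  apply: (row_full_inj (col_base_full Q)); apply: (row_free_inj (row_base_free Q)).
  by rewrite mulmx1 mulmx_base mulmxA mulmx_base -mulmxA mulmx_base.
by rewrite -{1}(mulmx_base Q) mxtrace_mulC base_inv mxtrace1.
Qed.

Lemma qformE (R : comNzRingType) p (Q : 'M[R]_p) (z : 'cV[R]_p) :
  (z^T *m Q *m z) 0 0 = \sum_j \sum_k z j 0 * z k 0 * Q j k.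
Proof.
rewrite mxE exchange_big; apply: eq_bigr => k _; rewrite mxE mulr_suml.
by apply: eq_bigr => j _; rewrite mxE mulrAC.
Qed.

Section sqnorm.
Variable R : realType.

Lemma sqnormE p (v : 'cV[R]_p) : sqnorm v = (v^T *m v) 0 0.
Proof. by rewrite mxE; apply: eq_bigr => i _; rewrite mxE expr2. Qed.

Lemma sqnorm_ge0 p (v : 'cV[R]_p) : 0 <= sqnorm v.
Proof. by apply: sumr_ge0 => i _; exact: sqr_ge0. Qed.

Lemma sqnormZ p (c : R) (v : 'cV[R]_p) : sqnorm (c *: v) = c ^+ 2 * sqnorm v.
Proof. by rewrite /sqnorm mulr_sumr; apply: eq_bigr => i _; rewrite mxE exprMn. Qed.

Lemma sqr_norm2 p (v : 'cV[R]_p) : norm2 v ^+ 2 = sqnorm v.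
Proof. by rewrite sqr_sqrtr // sqnorm_ge0. Qed.

(* No hypothesis z != 0 is needed: for z = 0 both sides are 0, as 0^-1 = 0. *)
Lemma sqnorm_mulmx_normalize k p (Q : 'M[R]_(k, p)) (z : 'cV[R]_p) :
  sqnorm (Q *m ((norm2 z)^-1 *: z)) = sqnorm (Q *m z) / sqnorm z.
Proof. by rewrite -scalemxAr sqnormZ exprVn sqr_norm2 mulrC. Qed.

Lemma sqnorm_orth_proj p (Q : 'M[R]_p) (z : 'cV[R]_p) : Q^T = Q -> Q *m Q = Q ->
  sqnorm (Q *m z) = (z^T *m Q *m z) 0 0.
Proof.
by move=> QT QQ; rewrite sqnormE trmx_mul mulmxA -[_ *m Q^T *m Q]mulmxA QT QQ.
Qed.

End sqnorm.

Section quadratic_form_expectation.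
Context d (T : measurableType d) (R : realType) (P : probability T R).

Lemma Lfun_fsum (I : finType) (F : I -> T -> R) :
  (forall i, F i \in Lfun P 1) -> (fun w => \sum_i F i w) \in Lfun P 1.
Proof.
move=> LF; rewrite (_ : (fun w => _) = \sum_i F i); last first.
  by apply/funext => w; rewrite fct_sumE.
exact: rpred_sum.
Qed.

Lemma expectation_fsum (I : finType) (F : I -> T -> R) :
  (forall i, F i \in Lfun P 1) -> ('E_P[fun w => (\sum_i F i w)%R] = \sum_i 'E_P[F i])%E.
Proof.
move=> LF; rewrite (_ : (fun w => _) = \sum_(G <- map F (index_enum I)) G).
  by rewrite expectation_sum ?big_map // => _ /mapP[i _ ->].
by apply/funext => w; rewrite fct_sumE big_map.
Qed.

Lemma expectation_mul_coord p (xs : rvec P p) j k : zero_mean_id_cov xs ->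
  'E_P[fun w => (xs j w * xs k w)%R]%E = (j == k)%:R%:E.
Proof.
move=> [L2 [E0 Cov]]; have := Cov j k.
have L1 i : (xs i : T -> R) \in Lfun P 1.
  by apply: Lfun_subset12 (L2 i); exact: fin_num_measure.
by rewrite covarianceE ?E0 ?mule0 ?sube0 ?L1 ?Lfun2_mul_Lfun1.
Qed.

Lemma expectation_qform p (xs : rvec P p) (Q : 'M[R]_p) : zero_mean_id_cov xs ->
  'E_P[fun w => (((rvec_at xs w)^T *m Q *m rvec_at xs w) 0 0)%R]%E = (\tr Q)%:E.
Proof.
move=> Hx; have [L2 _] := Hx.
have Lterm j k : (fun w => xs j w * xs k w * Q j k) \in Lfun P 1.
  rewrite (_ : (fun w => _) = Q j k \o* (fun w => xs j w * xs k w)) ?Lfun_scale //.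
  exact: Lfun2_mul_Lfun1.
under eq_fun do rewrite qformE /rvec_at.
under eq_fun do under eq_bigr do under eq_bigr do rewrite !mxE.
rewrite expectation_fsum => [|j]; last exact: Lfun_fsum.
rewrite /mxtrace -sumEFin; apply: eq_bigr => j _.
rewrite expectation_fsum // (bigD1 j) //= big1 ?adde0 => [|k kj].
  by rewrite expectationZl ?Lfun2_mul_Lfun1 // expectation_mul_coord // eqxx mule1.
by rewrite expectationZl ?Lfun2_mul_Lfun1 // expectation_mul_coord // eq_sym (negbTE kj) mule0.
Qed.

End quadratic_form_expectation.

Section tail_bound.
Context d (T : measurableType d) (R : realType) (P : probability T R).

Lemma measurable_sqnorm_mulmx k p (Q : 'M[R]_(k, p)) (xs : rvec P p) :
  measurable_fun setT (fun w => sqnorm (Q *m rvec_at xs w)).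
Proof.
apply: measurable_sum => i; apply: measurable_realfun.measurable_funX.
under eq_fun do rewrite !mxE.
apply: measurable_sum => j; under eq_fun do rewrite mxE.
by apply: measurable_realfun.measurable_funM => //; apply: measurable_cst.
Qed.

Lemma markov_nonneg (g : T -> R) (e : R) : measurable_fun setT g ->
  (forall w, 0 <= g w) -> 0 < e -> (e%:E * P [set w | (e <= g w)%R] <= 'E_P[g])%E.
Proof.
move=> mg g0 e0; pose G : {RV P >-> R} := mfun_Sub (f := g) (mem_set mg).
have := @markov _ _ _ P G id e e0 (@measurable_id _ _ setT)
  (fun r r0 => r0) (fun a _ b _ ab => ab).
rewrite (_ : [set w | _] = [set w | e <= g w]); last first.
  by apply/seteqP; split => w /=; rewrite lee_fin ger0_norm.
suff -> : 'E_P[(id \o Num.norm) \o (G : T -> R)]%E = 'E_P[g]%E by [].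
by congr ('E_P[_])%E; apply/funext => w /=; rewrite ger0_norm.
Qed.

Lemma ratio_ge_setE (g s : T -> R) (t : R) : (forall w, 0 <= g w) -> 0 < t ->
  [set w | t <= g w / s w] = [set w | 0 < s w] `&` [set w | t * s w <= g w].
Proof.
move=> g0 t0; apply/seteqP; split => w /=.
  have [s0 | s_le0] := ltP 0 (s w); first by rewrite ler_pdivlMr // => ?; split.
  by move/(lt_le_trans t0); rewrite ltNge mulr_ge0_le0 ?invr_le0.
by move=> [s0]; rewrite ler_pdivlMr.
Qed.

Lemma ratio_tail_bound (g s : T -> R) (c t a : R) :
  measurable_fun setT g -> measurable_fun setT s ->
  (forall w, 0 <= g w) -> 0 < c -> 0 < t ->
  {ae P, forall w, c <= s w} -> ('E_P[g] <= a%:E)%E ->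
  (P [set w | (t <= g w / s w)%R] <= (a / (c * t))%:E)%E.
Proof.
move=> mg ms g0 c0 t0 [N [mN PN0 sN]] Eg.
have ct0 : 0 < c * t by rewrite mulr_gt0.
have mB : measurable [set w | c * t <= g w].
  by rewrite -[X in measurable X]setTI; apply: measurable_fun_le => //; exact: measurable_cst.
have mA : measurable [set w | t <= g w / s w].
  rewrite ratio_ge_setE //; apply: measurableI.
    rewrite -[X in measurable X]setTI.
    by apply: (measurable_realfun.measurable_fun_ltr (measurable_cst (0 : R)) ms measurableT).
  rewrite -[X in measurable X]setTI; apply: measurable_fun_le => //.
  by apply: measurable_realfun.measurable_funM => //; exact: measurable_cst.
have AB : [set w | t <= g w / s w] `<=` N `|` [set w | c * t <= g w].
  move=> w; rewrite ratio_ge_setE // => -[s0 tsg].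
  have [Nw | nNw] := pselect (N w); [by left | right].
  have csw : c <= s w by apply: contrapT => ncs; exact/nNw/sN.
  by apply: le_trans tsg; rewrite mulrC ler_pM2l.
have PB : (P [set w | (c * t <= g w)%R] <= (a / (c * t))%:E)%E.
  rewrite -(fineK (fin_num_measure P _ mB)) lee_fin ler_pdivlMr // mulrC -lee_fin EFinM.
  by rewrite fineK ?fin_num_measure //; apply: le_trans Eg; exact: markov_nonneg.
apply: le_trans PB; apply: (le_trans (le_measure _ _ _ AB)); rewrite ?inE //.
  exact: measurableU.
apply: (le_trans (measureU2 _ mN mB)).
by rewrite [X in (X + _)%E]PN0 add0e.
Qed.

End tail_bound.

Lemma orth_proj_tail_bound d (T : measurableType d) (R : realType)
    (P : probability T R) p k r (A : 'M[R]_(p, k)) (Q : 'M[R]_p) (xs : rvec P p)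
    (rx delta : R) :
  zero_mean_id_cov xs -> orth_proj_col A Q -> (\rank A <= r)%N ->
  0 < rx -> 0 < delta -> delta < 1 ->
  {ae P, forall w, rx <= norm2 (rvec_at xs w)} ->
  (P [set w | (1 - delta <= sqnorm (Q *m ((norm2 (rvec_at xs w))^-1 *: rvec_at xs w)))%R]
     <= (r%:R / (rx ^+ 2 * (1 - delta)))%:E)%E.
Proof.
move=> Hx [QT [QQ QA]] rA rx0 d0 d1 Hrx.
have rankQ : \rank Q = \rank A by rewrite -mxrank_tr (eqmx_rank QA) mxrank_tr.
under eq_set do rewrite sqnorm_mulmx_normalize.
apply: ratio_tail_bound; rewrite ?subr_gt0 ?exprn_gt0 //.
- exact: measurable_sqnorm_mulmx.
- rewrite (_ : (fun w => _) = fun w => sqnorm (1%:M *m rvec_at xs w)).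
    exact: measurable_sqnorm_mulmx.
  by apply/funext => w; rewrite mul1mx.
- by move=> w; exact: sqnorm_ge0.
- apply: filterS Hrx => w rxw; rewrite -sqr_norm2.
  by rewrite ler_pXn2r ?nnegrE ?(ltW rx0) ?(le_trans (ltW rx0)).
- under eq_fun do rewrite sqnorm_orth_proj //.
  by rewrite expectation_qform // mxtrace_idem // rankQ lee_fin ler_nat.
Qed.

Theorem lemma2 (R : realType) (m n q : nat)
  (S : 'cV[R]_m -> 'cV[R]_n -> 'cV[R]_q) (HS : bilinear_map S)
  (K' : set 'M[R]_(m, n))
  (X : 'M[R]_(m, n))
  (HX : (Nset S 2 `&` diffset K') X) (HX0 : X != 0)
  (delta : R) (Hd0 : 0 < delta) (Hd1 : delta < 1)
  (d : measure_display) (T : measurableType d) (P : probability T R)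
  (x : rvec P m) (y : rvec P n)
  (Hx : zero_mean_id_cov x) (Hy : zero_mean_id_cov y)
  (Hxy : indep_rvec x y)
  (rx ry : R) (Hrx : 0 < rx) (Hry : 0 < ry)
  (Hxr : {ae P, forall w, rx <= norm2 (rvec_at x w)})
  (Hyr : {ae P, forall w, ry <= norm2 (rvec_at y w)})
  (PC : 'M[R]_m) (HPC : orth_proj_col X PC)
  (PR : 'M[R]_n) (HPR : orth_proj_row X PR) :
  let u := fun w => (norm2 (rvec_at x w))^-1 *: rvec_at x w in
  let v := fun w => (norm2 (rvec_at y w))^-1 *: rvec_at y w in
  (P [set w | (1 - delta <= sqnorm (PC *m u w))%R] <= (2 / (rx ^+ 2 * (1 - delta)))%:E)%E /\
  (P [set w | (1 - delta <= sqnorm (PR *m v w))%R] <= (2 / (ry ^+ 2 * (1 - delta)))%:E)%E.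
Proof.
have [[rankX _] _] := HX.
split; first exact: orth_proj_tail_bound Hx HPC rankX Hrx Hd0 Hd1 Hxr.
by apply: orth_proj_tail_bound Hy HPR _ Hry Hd0 Hd1 Hyr; rewrite mxrank_tr.
Qed.
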